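(* Let $c_0$ be a positive integer and let $\kappa_0\in\overline{\mathbb{Z}}_p$ satisfy condition $( * )$. Then there exists an increasing sequence of positive integers $(k_i)_{i\ge0}$ such that for each $i$: (a) $k_i-1>c_0(2+\log_p k_{i+1})$, and (b) no integer in $\{k_i,k_i+1,\dots,k_{i+1}-1\}$ is congruent to $\kappa_0$ modulo $p^{\lceil\log_p k_{i+1}\rceil}$ (i.e. for no such integer $k$ does $k-\kappa_0$ lie in $p^{\lceil\log_p k_{i+1}\rceil}\overline{\mathbb{Z}}_p$).
   Context: For $\lambda\in\mathbb{Z}_p$ and $m\ge1$, let $\lambda^{\{m\}}$ denote the unique integer in $\{0,1,\dots,p^m-1\}$ congruent to $\lambda$ modulo $p^m$. An element $\lambda\in\overline{\mathbb{Z}}_p$ satisfies condition $( * )$ if one of the following holds: (1) $\lambda\notin\mathbb{Z}_p$; (2) $\lambda\in\mathbb{Z}_p\setminus\mathbb{N}$ and $\lambda^{\{m\}}/m\to\infty$ as $m\to\infty$; (3) $\lambda\in\mathbb{N}$. *)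

From Stdlib Require Import Reals.
From mathcomp Require Import all_boot all_algebra.
Set Implicit Arguments. Unset Strict Implicit. Unset Printing Implicit Defensive.
Import GRing.Theory Num.Theory.
Local Open Scope ring_scope.

(* O plays the role of \overline{Z}_p.            *)
Definition congp (O : comNzRingType) (p m : nat) (x y : O) : Prop :=
  exists z : O, x - y = ((p ^ m)%N)%:R * z.

(* Z \cap p^m O = p^m Z  (true for O = \overline{Z}_p). *)
Definition int_div_reflect (O : comNzRingType) (p : nat) : Prop :=
  forall (a : int) (m : nat), congp p m (a%:~R : O) 0 -> (((p ^ m)%N)%:Z %| a)%Z.

(* lambda \in Z_p  <=>  lambda is in the p-adic closure of Z in O. *)
Definition inZp (O : comNzRingType) (p : nat) (l : O) : Prop :=
  forall m : nat, exists a : int, congp p m l (a%:~R).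

Definition isNat (O : comNzRingType) (l : O) : Prop := exists n : nat, l = n%:R.

(* lambda^{m} / m -> oo, where lambda^{m} is the (unique) integer r in
   {0,..,p^m-1} with r = lambda mod p^m. *)
Definition resid_over_m_to_infty (O : comNzRingType) (p : nat) (l : O) : Prop :=
  forall B : nat, exists M : nat, forall m : nat, (M <= m)%N ->
    forall r : nat, (r < p ^ m)%N -> congp p m l (r%:R) -> (B * m < r)%N.

Definition cond_star (O : comNzRingType) (p : nat) (l : O) : Prop :=
  ~ inZp p l
  \/ (inZp p l /\ ~ isNat l /\ resid_over_m_to_infty p l)
  \/ isNat l.

Definition logp (p x : nat) : R := Rdiv (ln (INR x)) (ln (INR p)).

Definition cond_a (p c0 ki kj : nat) : Prop :=
  Rgt (Rminus (INR ki) (INR 1)) (Rmult (INR c0) (Rplus (INR 2) (logp p kj))).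

(* ceil(log_p k) for k >= 1 is the least e with k <= p^e, i.e. [up_log p k]. *)
Definition ceil_logp (p k : nat) : nat := up_log p k.

(** Choose the blocks one exponent at a time.  Given [k] large, pick [e] with
    [c0 (e + 2) + 1 < k <= c0 (e + 4)]; any [k' <= p^e] then satisfies (a),
    because [log_p k' <= e].  If [kappa0] is not in [Z_p], or is a natural
    number [n], take [k' = p^e]: then [ceil(log_p k') = e], and an integer
    [j > n] below [p^e] cannot be [kappa0] modulo [p^e].  Otherwise take for
    [k'] the residue [r] of [kappa0] modulo [p^e]: by condition ( * ) it exceeds
    [c0 (e + 4)] for large [e], and a positive [j < r] congruent to [r] modulo
    [p^(ceil(log_p r))] would give [p^(ceil(log_p r)) <= r - j < r]. *)

From Pilot Require Import Defs.
From Stdlib Require Import Reals Lra Lia Classical ClassicalEpsilon.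
From mathcomp Require Import all_boot all_algebra zify ring.
Import GRing.Theory Num.Theory.

Set Implicit Arguments.
Unset Strict Implicit.
Unset Printing Implicit Defensive.

Lemma INR_expn (p e : nat) : INR (p ^ e) = pow (INR p) e.
Proof.
elim: e => [|e IH] //=; rewrite expnS -IH.
by change (muln p (p ^ e)) with (Nat.mul p (p ^ e)); rewrite mult_INR.
Qed.

Section LogBound.
Local Open Scope R_scope.

Lemma logp_le (p k e : nat) :
  (1 < p)%N -> (0 < k)%N -> (k <= p ^ e)%N -> logp p k <= INR e.
Proof.
move=> /ltP/lt_INR /= hp /ltP/lt_0_INR hk /leP/le_INR hke.
rewrite INR_expn in hke.
have ln_p_gt0 : 0 < ln (INR p) by rewrite -ln_1; apply: ln_increasing; lra.
have ln_k_le : ln (INR k) <= INR e * ln (INR p).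
  rewrite -ln_pow; last lra.
  case: (Rle_lt_or_eq_dec _ _ hke) => [lt|->]; last exact: Rle_refl.
  exact/Rlt_le/ln_increasing.
rewrite /logp; apply: (Rmult_le_reg_r (ln (INR p))) => //.
by rewrite /Rdiv Rmult_assoc Rinv_l; lra.
Qed.

Lemma cond_a_le_expn (p c0 k k' e : nat) :
  (1 < p)%N -> (0 < k')%N -> (k' <= p ^ e)%N -> (c0 * (e + 2) + 1 < k)%N ->
  cond_a p c0 k k'.
Proof.
move=> hp hk' hk'e /ltP/lt_INR.
change (INR (Nat.add (Nat.mul c0 (Nat.add e 2)) 1) < INR k -> cond_a p c0 k k').
rewrite plus_INR mult_INR plus_INR /cond_a /= => hk.
have := Rmult_le_compat_l _ _ _ (pos_INR c0) (logp_le hp hk' hk'e); lra.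
Qed.

End LogBound.

Lemma lin_lt_expn (p c e : nat) : (1 < p)%N -> (4 * c + 8 <= e)%N ->
  (c * (e + 4) < p ^ e)%N.
Proof.
move=> hp /subnKC <-; set t := (e - _)%N; clearbody t.
apply: (@leq_trans (2 ^ (4 * c + 8 + t))); last by rewrite leq_exp2r //; lia.
elim: t => [|t IH].
  rewrite addn0 (_ : 4 * c + 8 = (2 * c + 4) * 2)%N ?expnM; last lia.
  have := ltn_expl (2 * c + 4) (isT : (1 < 2)%N); nia.
rewrite (addnS (4 * c + 8) t) expnS.
have : (c < 2 ^ (4 * c + 8 + t))%N.
  by rewrite (leq_trans (ltn_expl c (isT : (1 < 2)%N))) // leq_exp2l //; lia.
lia.
Qed.

Lemma exists_scale_exponent (c N k : nat) : (0 < c)%N -> (c * (N + 3) < k)%N ->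
  exists e, [/\ (N <= e)%N, (c * (e + 2) + 1 < k)%N & (k <= c * (e + 4))%N].
Proof.
move=> hc hk; exists (k.-1 %/ c - 3)%N.
have := leq_divM k.-1 c; have := ltn_ceil k.-1 hc.
have : (N + 3 <= k.-1 %/ c)%N by rewrite leq_divRL //; lia.
move: (k.-1 %/ c)%N => q; split; nia.
Qed.

Lemma increasing_chain (K0 : nat) (Q : nat -> nat -> Prop) : (0 < K0)%N ->
  (forall k, (K0 <= k)%N -> exists k', [/\ (K0 <= k')%N, (k < k')%N & Q k k']) ->
  exists f : nat -> nat, [/\ forall i, (0 < f i)%N,
    forall i, (f i < f i.+1)%N & forall i, Q (f i) (f i.+1)].
Proof.
move=> hK0 hQ.
have hQ' k : exists k', (K0 <= k)%N -> [/\ (K0 <= k')%N, (k < k')%N & Q k k'].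
  have [/hQ [k' ?]|lt] := leqP K0 k; first by exists k'.
  by exists 0%N => ge; lia.
pose g k := proj1_sig (constructive_indefinite_description _ (hQ' k)).
have gP k : (K0 <= k)%N -> [/\ (K0 <= g k)%N, (k < g k)%N & Q k (g k)].
  exact: (proj2_sig (constructive_indefinite_description _ (hQ' k))).
have fK i : (K0 <= iter i g K0)%N.
  by elim: i => [|i IH] //=; case: (gP _ IH).
exists (fun i => iter i g K0); split => i.
- exact: leq_trans hK0 (fK i).
- by case: (gP _ (fK i)).
- by case: (gP _ (fK i)).
Qed.

Section Congruence.
Variables (O : comNzRingType) (p : nat).
Local Open Scope ring_scope.

Lemma congp_le m u (x y : O) : (u <= m)%N -> congp p m x y -> congp p u x y.
Proof.
move=> /subnKC <- [z hz]; exists (((p ^ (m - u))%N)%:R * z).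
by rewrite hz expnD natrM mulrA.
Qed.

Lemma congp_sym m (x y : O) : congp p m x y -> congp p m y x.
Proof. by move=> [z hz]; exists (- z); rewrite mulrN -hz opprB. Qed.

Lemma congp_trans m (x y w : O) :
  congp p m x y -> congp p m y w -> congp p m x w.
Proof.
move=> [z hz] [z' hz']; exists (z + z').
by rewrite mulrDr -hz -hz' addrA subrK.
Qed.

Lemma inZp_residue (l : O) m : (0 < p)%N -> Defs.inZp p l ->
  exists2 r : nat, (r < p ^ m)%N & congp p m l r%:R.
Proof.
move=> hp /(_ m) [a [z hz]].
have d_gt0 : (0 < Posz (p ^ m)%N)%R by rewrite ltz_nat expn_gt0 hp.
have := modz_ge0 a (lt0r_neq0 d_gt0); have := ltz_pmod a d_gt0.
have ea := divz_eq a (p ^ m)%N.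
case: (a %% (p ^ m)%N)%Z ea => [r|//] ea; rewrite ltz_nat => hr _.
exists r => //; exists (z + (a %/ (p ^ m)%N)%Z%:~R).
have -> : (r%:R : O) = a%:~R - (a %/ (p ^ m)%N)%Z%:~R * (p ^ m)%N%:R.
  by rewrite [in a%:~R]ea intrD intrM addrAC subrr add0r.
by rewrite mulrDr -hz; ring.
Qed.

Hypothesis hO : int_div_reflect O p.

Lemma congp_nat_gap u (j n : nat) : (n < j)%N ->
  congp p u (j%:R : O) n%:R -> (p ^ u <= j - n)%N.
Proof.
move=> lt_nj [z hz]; apply: dvdn_leq; first by rewrite subn_gt0.
have := @hO (Posz (j - n)%N) u; rewrite dvdzE; apply.
by exists z; rewrite subr0 -hz -natrB // ltnW.
Qed.

Definition avoids (kappa : O) (N k' : nat) : Prop :=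
  forall j : nat, (N <= j < k')%N -> ~ congp p (ceil_logp p k') j%:R kappa.

Hypothesis hp : (1 < p)%N.

Lemma avoids_notZp (kappa : O) : ~ Defs.inZp p kappa ->
  exists m0, forall e N, (m0 <= e)%N -> avoids kappa N (p ^ e).
Proof.
move=> notZp.
have [m0 hm0] : exists m0, forall a : int, ~ congp p m0 kappa a%:~R.
  apply: NNPP => hne; apply: notZp => m; apply: NNPP => hm; apply: hne.
  by exists m => a ha; apply: hm; exists a.
exists m0 => e N le_m0e j _; rewrite /ceil_logp up_expnK // => hj.
by apply: (hm0 j); apply: congp_sym; apply: congp_le le_m0e hj.
Qed.

Lemma avoids_nat (n N e : nat) : (n < N)%N -> avoids n%:R N (p ^ e).
Proof.
move=> lt_nN j /andP[le_Nj lt_je]; rewrite /ceil_logp up_expnK // => hj.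
by have := congp_nat_gap (leq_trans lt_nN le_Nj) hj; lia.
Qed.

Lemma avoids_residue (kappa : O) (N e r : nat) : (0 < N)%N ->
  (r < p ^ e)%N -> congp p e kappa r%:R -> avoids kappa N r.
Proof.
move=> N_gt0 lt_re hr j /andP[le_Nj lt_jr] hj.
have hjr := congp_sym (congp_trans hj (congp_le (up_log_min hp (ltnW lt_re)) hr)).
have := congp_nat_gap lt_jr hjr; have := up_logP r hp; rewrite /ceil_logp; lia.
Qed.

Lemma cond_star_avoids (kappa : O) (c : nat) : cond_star p kappa ->
  exists N, (0 < N)%N /\ forall e, (N <= e)%N ->
    exists k', [/\ (c * (e + 4) < k')%N, (k' <= p ^ e)%N & avoids kappa N k'].
Proof.
case=> [notZp | [[inZ [_ resid]] | [n ->]]].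
- have [m0 hm0] := avoids_notZp notZp.
  exists (m0 + 4 * c + 8)%N; split=> [|e le_Ne]; first lia.
  exists (p ^ e)%N; split=> //; first by apply: lin_lt_expn; lia.
  by apply: hm0; lia.
- have [M hM] := resid (2 * c)%N.
  exists (M + 4)%N; split=> [|e le_Ne]; first lia.
  have [r lt_re hr] := inZp_residue e (ltnW hp) inZ.
  have lt_er := hM e (leq_trans (leq_addr 4 M) le_Ne) r lt_re hr.
  exists r; split; [nia | exact: ltnW | apply: avoids_residue lt_re hr; lia].
- exists (n + 4 * c + 8)%N; split=> [|e le_Ne]; first lia.
  exists (p ^ e)%N; split=> //; first by apply: lin_lt_expn; lia.
  by apply: avoids_nat; lia.
Qed.

End Congruence.

Local Open Scope ring_scope.

Theorem lemma4p5 (p : nat) (O : comNzRingType) (hp : prime p)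
  (hO : int_div_reflect O p) (c0 : nat) (hc0 : (0 < c0)%N)
  (kappa0 : O) (hk : cond_star p kappa0) :
  exists k : nat -> nat,
    (forall i, (0 < k i)%N) /\
    (forall i, (k i < k i.+1)%N) /\
    (forall i, cond_a p c0 (k i) (k i.+1)) /\
    (forall i (j : nat), (k i <= j < k i.+1)%N ->
       ~ congp p (ceil_logp p (k i.+1)) (j%:R) kappa0).
Proof.
have hp1 := prime_gt1 hp.
have [N [N_gt0 hN]] := cond_star_avoids hO hp1 c0 hk.
have step k : (c0 * (N + 3) < k)%N -> exists k',
    [/\ (c0 * (N + 3) < k')%N, (k < k')%N &
        cond_a p c0 k k' /\ avoids p kappa0 k k'].
  move=> lt_K0k; have [e [le_Ne lt_ek le_ke]] := exists_scale_exponent hc0 lt_K0k.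
  have [k' [lt_ek' le_k'e av_Nk']] := hN e le_Ne.
  exists k'; split; [lia | lia | split].
  - by apply: (cond_a_le_expn hp1 _ le_k'e lt_ek); lia.
  - by move=> j /andP[le_kj lt_jk']; apply: av_Nk'; apply/andP; split; nia.
have [k [k_gt0 k_incr k_step]] := increasing_chain (ltn0Sn _) step.
exists k; do 2!split=> //; split=> i; by case: (k_step i).
Qed.
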